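(* Fix $d\ge1$. Let $(\mathcal{F},s)$ be a uniformly random $d$-Shuffled Simon's instance of size $n$. Let $\mathcal{A}^{\mathcal{F}}=\Pi\circ U_{d+1}\circ\mathcal{F}\circ U_d\circ\cdots\circ\mathcal{F}\circ U_1$ be any $\mathrm{QNC}_d$ circuit acting on $\mathrm{poly}(n)$ qubits initialised to $|0\cdots0\rangle$, with single-layer unitaries $U_j$ independent of the oracle, polynomially many parallel queries per oracle application, and a final computational-basis measurement $\Pi$. Then $\Pr[s\leftarrow\mathcal{A}^{\mathcal{F}}]\le\mathrm{poly}(n)\cdot2^{-n}$.
   Context: Identify $\{0,1\}^n$ with $\{0,\dots,N-1\}$, $N=2^n$, and embed it in $\{0,1\}^{2n}$ by prefixing $n$ zeros. A $d$-Shuffler for a function $f:\{0,1\}^n\to\{0,1\}^n$ is the tuple of functions $(f_0,\dots,f_d)$ on $\{0,1\}^{2n}\cup\{\perp\}$ sampled as follows: let $t_{-1}=(0,1,\dots,N-1)$; let $t_0,\dots,t_{d-1}$ be independent, each uniformly random among tuples of $N$ distinct elements of $\{0,1\}^{2n}$; let $t_d=(f(0),\dots,f(N-1))$. For $0\le i\le d$: if $x$ is the $j$-th entry of $t_{i-1}$ then $f_i(x)$ is the $j$-th entry of $t_i$; otherwise (including $x=\perp$) $f_i(x)=\perp$. Thus $f_d\circ\cdots\circ f_0(x)=f(x)$ for $x\in\{0,1\}^n$. $d$-Shuffled Simon's instance: sample a uniformly random Simon function $(g,s)$ ($s\ne0^n$, $g$ two-to-one with $g(x)=g(y)\iff y\in\{x,x\oplus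 s\}$), then a $d$-Shuffler $(f_0,\dots,f_d)$ for $g$; $\mathcal{F}$ is the standard (XOR) oracle for $(f_0,\dots,f_d)$ (with $\perp$ encoded as a distinguished string). Goal: output $s$. A single-layer unitary is a product of one- and two-qubit gates on disjoint qubits. *)

From mathcomp Require Import all_boot all_algebra.
From mathcomp Require Import reals complex.
Set Implicit Arguments. Unset Strict Implicit. Unset Printing Implicit Defensive.
Import GRing.Theory Num.Theory.
Local Open Scope ring_scope.

Definition bs (n : nat) := {ffun 'I_n -> bool}.
Definition zeros (n : nat) : bs n := [ffun => false].
Definition bxor (n : nat) (x y : bs n) : bs n := [ffun i => x i (+) y i].
(* bit p of x (false when out of range) *)
Definition getb (n : nat) (x : bs n) (p : nat) : bool :=
  if (insub p : option 'I_n) is Some q then x q else false.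

Definition embed (n : nat) (x : bs n) : bs (n + n) :=
  [ffun i => match split i with inl _ => false | inr j => x j end].

Definition simon_pair (n : nat) (g : {ffun bs n -> bs n}) (s : bs n) : bool :=
  (s != zeros n) &&
  [forall x, forall y, (g x == g y) == ((y == x) || (y == bxor x s))].

(* t_{i-1} for i = 0..d+1:  t_{-1} = embed, t_0..t_{d-1} = T, t_d = embed \o g *)
Definition tup (n d : nat) (g : {ffun bs n -> bs n})
  (T : {ffun 'I_d -> {ffun bs n -> bs (n + n)}}) (i : nat) : bs n -> bs (n + n) :=
  match i with
  | 0 => @embed n
  | i'.+1 => if (insub i' : option 'I_d) is Some j then T j else (fun x => embed (g x))
  end.

(* f_i on {0,1}^{2n} \cup {bot}, bot = None *)
Definition shuf_fun (n d : nat) (g : {ffun bs n -> bs n})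
  (T : {ffun 'I_d -> {ffun bs n -> bs (n + n)}}) (i : nat)
  (x : option (bs (n + n))) : option (bs (n + n)) :=
  match x with
  | None => None
  | Some v => if [pick j | tup g T i j == v] is Some j
              then Some (tup g T i.+1 j) else None
  end.

(* bit 0 is a flag; Some v ↦ (0, v), None ↦ (1, 0^{2n});
   any string with flag 1 decodes to bot *)
Definition enc (n : nat) (v : option (bs (n + n))) (j : nat) : bool :=
  match v with
  | None => j == 0%N
  | Some u => if j is j'.+1 then getb u j' else false
  end.
Definition dec (n : nat) (b : nat -> bool) : option (bs (n + n)) :=
  if b 0%N then None else Some [ffun j : 'I_(n + n) => b j.+1].

(* One query slot = (d+1) index qubits, (2n+1) input qubits, (2n+1) output qubits *)
Definition elen (n : nat) := (n + n).+1.
Definition qwidth (d n : nat) := (d.+1 + elen n + elen n)%N.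

(* The oracle permutation of basis states: k parallel query slots occupying
   qubits [0, k*w); slot s maps |i, x, y> to |i, x, y xor f_i(x)> when i <= d
   (identity when the index i > d); all other qubits are untouched. *)
Definition oracle_map (n d m k : nat) (fs : nat -> option (bs (n + n)) -> option (bs (n + n)))
  (y : bs m) : bs m :=
  [ffun q : 'I_m =>
     let p := nat_of_ord q in
     let w := qwidth d n in
     if (p < k * w)%N then
       let base := (p %/ w * w)%N in
       let o := (p %% w)%N in
       let idx := (\sum_(t < d.+1) getb y (base + t) * 2 ^ t)%N in
       let inp := dec n (fun j => getb y (base + d.+1 + j)) in
       if ((d.+1 + elen n <= o) && (idx <= d))%N
       then y q (+) enc (fs idx inp) (o - (d.+1 + elen n))
       else y q
     else y q].

Section Quantum.
Variable R : realType.
Local Notation C := R[i].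

(* operators on m qubits as (row, column) coefficient functions; states as amplitude functions *)
Definition applyop (m : nat) (A : bs m -> bs m -> C) (psi : bs m -> C) : bs m -> C :=
  fun x => \sum_(y : bs m) A x y * psi y.

Definition unitaryf (T : finType) (U : T -> T -> C) : Prop :=
  forall x y : T, \sum_(z : T) (U z x)^* * U z y = (x == y)%:R.

Inductive gate (m : nat) :=
| G1 of 'I_m & (bool -> bool -> C)
| G2 of 'I_m & 'I_m & (bool * bool -> bool * bool -> C).

Definition gate_supp (m : nat) (g : gate m) : {set 'I_m} :=
  match g with G1 a _ => [set a] | G2 a b _ => [set a; b] end.

Definition gate_ok (m : nat) (g : gate m) : Prop :=
  match g with
  | G1 _ U => unitaryf U
  | G2 a b U => a != b /\ unitaryf U
  end.

(* the gate tensored with the identity on the other qubits *)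
Definition gate_op (m : nat) (g : gate m) : bs m -> bs m -> C :=
  fun x y =>
    [forall q, (q \notin gate_supp g) ==> (x q == y q)]%:R *
    match g with
    | G1 a U => U (x a) (y a)
    | G2 a b U => U (x a, x b) (y a, y b)
    end.

Definition single_layer (m : nat) (gs : seq (gate m)) : Prop :=
  foldr (fun g P => gate_ok g /\ P) True gs /\
  pairwise (fun g h => [disjoint gate_supp g & gate_supp h]) gs.

Definition apply_layer (m : nat) (gs : seq (gate m)) (psi : bs m -> C) : bs m -> C :=
  foldr (fun g phi => applyop (gate_op g) phi) psi gs.

Definition psi0 (m : nat) : bs m -> C := fun x => (x == zeros m)%:R.

Definition oracle_op (n d m k : nat) fs : bs m -> bs m -> C :=
  fun x y => (x == @oracle_map n d m k fs y)%:R.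

(* state after U_{j+1} F U_j ... F U_1 |0..0> *)
Fixpoint evolve (n d m k : nat) fs (layers : nat -> seq (gate m)) (j : nat) : bs m -> C :=
  match j with
  | 0 => apply_layer (layers 0%N) (@psi0 m)
  | j'.+1 => apply_layer (layers j)
               (applyop (@oracle_op n d m k fs) (@evolve n d m k fs layers j'))
  end.

Definition success_on (n d m k : nat) (layers : nat -> seq (gate m)) (out : bs m -> bs n)
  (g : {ffun bs n -> bs n}) (s : bs n) (T : {ffun 'I_d -> {ffun bs n -> bs (n + n)}}) : C :=
  let psi := @evolve n d m k (shuf_fun g T) layers d in
  \sum_(x : bs m) (out x == s)%:R * `|psi x| ^+ 2.

(* sample space: uniform Simon pair (g,s) and independent uniform injective t_0..t_{d-1} *)
Definition instances (n d : nat) :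
  {set ({ffun bs n -> bs n} * bs n * {ffun 'I_d -> {ffun bs n -> bs (n + n)}})} :=
  [set w : ({ffun bs n -> bs n} * bs n * {ffun 'I_d -> {ffun bs n -> bs (n + n)}}) |
     simon_pair w.1.1 w.1.2 && [forall i : 'I_d, injectiveb (w.2 i)]].

Definition success_prob (n d m k : nat) (layers : nat -> seq (gate m)) (out : bs m -> bs n) : C :=
  (\sum_(w in instances n d) @success_on n d m k layers out w.1.1 w.1.2 w.2) / #|instances n d|%:R.

End Quantum.

(** A hybrid argument. In the hybrid circuit the i-th oracle call answers only
    f_0, ..., f_(i-1) and returns bottom for the other layers, so its state after
    j calls depends only on t_0, ..., t_(j-1).  Passing from the j-th hybrid to
    the real circuit at the next call moves only the amplitude of basis states
    some query slot of which asks for an f_i, i > j, at a point of the image of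
    t_(i-1).  That image is a uniformly random 2^n-subset of {0,1}^2n independent
    of the hybrid, so on average this weight is at most k d 2^n / 2^2n, and the
    final state is on average within O(k d^2 2^d 2^-n) (in squared norm) of the
    last hybrid, which no longer depends on (g, s).  Finally the Simon
    distribution is invariant under the linear involutions x |-> x + [x_p] u
    (u_p = 0) of {0,1}^n, which move any nonzero secret to any other in at most
    two steps, so an s-independent output equals s with probability at most
    1 / (2^n - 1). *)

From mathcomp Require Import all_boot all_algebra.
From mathcomp Require Import reals complex boolp order perm ring zify.
Set Implicit Arguments. Unset Strict Implicit. Unset Printing Implicit Defensive.
Import Order.TTheory GRing.Theory Num.Theory.
Local Open Scope ring_scope.

Lemma sum_involutive (T : finType) (V : nmodType) (f : T -> T) :
  involutive f -> forall F : T -> V, \sum_x F (f x) = \sum_x F x.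
Proof. by move=> fK F; rewrite [RHS](reindex_inj (can_inj fK)). Qed.

Lemma card_bs p : #|bs p| = (2 ^ p)%N.
Proof. by rewrite card_ffun card_bool card_ord. Qed.

Lemma normD_sqr_le (C : numClosedFieldType) (a b : C) :
  `|a + b| ^+ 2 <= 2 * `|a| ^+ 2 + 2 * `|b| ^+ 2.
Proof.
have parallelogram : 2 * `|a| ^+ 2 + 2 * `|b| ^+ 2 = `|a + b| ^+ 2 + `|a - b| ^+ 2.
  by rewrite !normCK rmorphB rmorphD /=; ring.
by rewrite parallelogram lerDl exprn_ge0.
Qed.

Lemma normB_sqr_le (C : numClosedFieldType) (a b : C) :
  `|a - b| ^+ 2 <= 2 * `|a| ^+ 2 + 2 * `|b| ^+ 2.
Proof. by have := normD_sqr_le a (- b); rewrite normrN. Qed.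

Section States.
Variables (R : realType) (m : nat).
Local Notation C := R[i].
Implicit Types (psi phi : bs m -> C) (A : bs m -> bs m -> C).

Definition sqnorm psi : C := \sum_x `|psi x| ^+ 2.
Definition state_sub psi phi : bs m -> C := fun x => psi x - phi x.

Lemma applyop_sub A psi phi :
  applyop A (state_sub psi phi) = state_sub (applyop A psi) (applyop A phi).
Proof.
apply: funext => x; rewrite /applyop /state_sub -sumrB.
by apply: eq_bigr => y _; rewrite mulrBr.
Qed.

Lemma sqnorm_unitary A psi : unitaryf A -> sqnorm (applyop A psi) = sqnorm psi.
Proof.
move=> A_unitary; rewrite /sqnorm /applyop.
transitivity (\sum_x \sum_y \sum_z (A x y * psi y) * (A x z * psi z)^*).
  apply: eq_bigr => x _; rewrite normCK rmorph_sum mulr_suml.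
  by apply: eq_bigr => y _; rewrite mulr_sumr.
rewrite exchange_big /=; apply: eq_bigr => y _; rewrite exchange_big /=.
transitivity (\sum_z (psi y * (psi z)^*) * (\sum_x (A x y)^* * A x z)^*).
  apply: eq_bigr => z _; rewrite rmorph_sum mulr_sumr; apply: eq_bigr => x _.
  by rewrite !rmorphM /= conjCK; ring.
under eq_bigr => z _ do rewrite A_unitary.
rewrite (bigD1 y) //= big1 ?addr0; first by rewrite eqxx rmorph1 mulr1 normCK.
by move=> z yz; rewrite eq_sym (negbTE yz) rmorph0 mulr0.
Qed.

Lemma sqnorm_addr_le psi phi :
  sqnorm (fun x => psi x + phi x) <= 2 * sqnorm psi + 2 * sqnorm phi.
Proof.
rewrite /sqnorm !mulr_sumr -big_split /=; apply: ler_sum => x _.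
exact: normD_sqr_le.
Qed.

Lemma sqnorm_psi0 : sqnorm (@psi0 R m) = 1.
Proof.
rewrite /sqnorm /psi0 (bigD1 (zeros m)) //= big1 ?addr0 ?eqxx ?normr1 ?expr1n //.
by move=> x /negbTE ->; rewrite normr0 expr0n.
Qed.

End States.

Section Lens.
Variables (R : realType) (m : nat) (K : finType).
Variables (put : bs m -> K -> bs m) (get : bs m -> K).
Hypotheses (get_put : forall x k, get (put x k) = k)
  (put_get : forall x, put x (get x) = x)
  (put_put : forall x k k', put (put x k) k' = put x k').

Definition lens_op (U : K -> K -> R[i]) : bs m -> bs m -> R[i] :=
  fun z x => (put x (get z) == z)%:R * U (get z) (get x).

Lemma eq_put_any x y k k' : (put x k == put y k) = (put x k' == put y k').
Proof.
apply/eqP/eqP => E.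
  by rewrite -(put_put x k k') E put_put.
by rewrite -(put_put x k' k) E put_put.
Qed.

Lemma lens_op_unitary U : unitaryf U -> unitaryf (lens_op U).
Proof.
move=> U_unitary x y; rewrite /lens_op.
have lens_sum z w : (put w (get z) == z)%:R * U (get z) (get w) =
    \sum_k (z == put w k)%:R * U k (get w).
  rewrite (bigD1 (get z)) //= big1 ?addr0; first by rewrite eq_sym.
  move=> k kz; case: eqP => [zE|]; last by rewrite mul0r.
  by move: kz; rewrite zE get_put eqxx.
under eq_bigr => z _ do rewrite !lens_sum rmorph_sum mulr_suml.
rewrite exchange_big /=.
transitivity (\sum_k \sum_k' (put x k == put y k')%:R *
                 ((U k (get x))^* * U k' (get y))).
  apply: eq_bigr => k _.
  under eq_bigr => z _ do rewrite mulr_sumr.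
  rewrite exchange_big /=; apply: eq_bigr => k' _.
  rewrite (bigD1 (put x k)) //= big1 ?addr0.
    by rewrite eqxx; case: eqP => _; rewrite /= ?rmorph1 ?rmorph0; ring.
  by move=> z zk; rewrite (negbTE zk) rmorph0; ring.
transitivity (\sum_k (put x k == put y k)%:R * ((U k (get x))^* * U k (get y))).
  apply: eq_bigr => k _; rewrite (bigD1 k) //= big1 ?addr0 //.
  move=> k' kk'; case: eqP => [E|]; last by rewrite mul0r.
  by move: kk'; rewrite -(get_put x k) E get_put eqxx.
under eq_bigr => k _ do rewrite (eq_put_any x y k (get y)).
rewrite -mulr_sumr U_unitary.
case: (eqVneq x y) => [->|xy]; first by rewrite put_get !eqxx mulr1.
rewrite put_get.
case: eqP => [E1|]; last by rewrite mul0r.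
case: eqP => [E2|]; last by rewrite mulr0.
by case/eqP: xy; rewrite -[x]put_get E2 E1.
Qed.

End Lens.

Section Gates.
Variables (R : realType) (m : nat).
Local Notation C := R[i].

Definition set_bit (a : 'I_m) (x : bs m) (b : bool) : bs m :=
  [ffun q => if q == a then b else x q].
Definition set_bit2 (a b : 'I_m) (x : bs m) (p : bool * bool) : bs m :=
  [ffun q => if q == a then p.1 else if q == b then p.2 else x q].

Lemma gate_opG1 a (U : bool -> bool -> C) :
  gate_op (G1 a U) = lens_op (set_bit a) (fun x => x a) U.
Proof.
apply: funext => x; apply: funext => y.
rewrite /gate_op /lens_op /=; congr (_%:R * _); congr nat_of_bool.
apply/forallP/eqP => [H|<- q].
  apply/ffunP => q; rewrite ffunE; case: eqP => [->//|/eqP qa].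
  by have := H q; rewrite inE qa /= => /eqP ->.
by rewrite inE ffunE; case: eqP => //= _; rewrite eqxx.
Qed.

Lemma gate_opG2 a b (U : bool * bool -> bool * bool -> C) :
  gate_op (G2 a b U) = lens_op (set_bit2 a b) (fun x => (x a, x b)) U.
Proof.
apply: funext => x; apply: funext => y.
rewrite /gate_op /lens_op /=; congr (_%:R * _); congr nat_of_bool.
apply/forallP/eqP => [H|<- q].
  apply/ffunP => q; rewrite ffunE; case: eqP => [->//|/eqP qa].
  case: eqP => [->//|/eqP qb].
  by have := H q; rewrite !inE (negbTE qa) (negbTE qb) /= => /eqP ->.
by rewrite !inE ffunE; case: eqP => //; case: eqP => //= _ _; rewrite eqxx.
Qed.

Lemma gate_unitary (g : gate R m) : gate_ok g -> unitaryf (gate_op g).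
Proof.
case: g => [a U|a b U] /=.
  move=> U_unitary; rewrite gate_opG1; apply: lens_op_unitary => //.
  - by move=> x k; rewrite ffunE eqxx.
  - by move=> x; apply/ffunP => q; rewrite ffunE; case: eqP => [->|].
  - by move=> x k k'; apply/ffunP => q; rewrite !ffunE; case: eqP.
move=> [ab U_unitary]; rewrite gate_opG2; apply: lens_op_unitary => //.
- by move=> x [k1 k2]; rewrite !ffunE eqxx eq_sym (negbTE ab) eqxx.
- move=> x; apply/ffunP => q; rewrite ffunE.
  by case: (q =P a) => [->//|_]; case: (q =P b) => [->|].
- by move=> x k k'; apply/ffunP => q; rewrite !ffunE; case: (q =P a) => //; case: (q =P b).
Qed.

Lemma apply_layer_sub (gs : seq (gate R m)) (psi phi : bs m -> C) :
  apply_layer gs (state_sub psi phi) = state_sub (apply_layer gs psi) (apply_layer gs phi).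
Proof. by elim: gs => //= g gs IH; rewrite IH applyop_sub. Qed.

Lemma sqnorm_apply_layer (gs : seq (gate R m)) (psi : bs m -> C) :
  single_layer gs -> sqnorm (apply_layer gs psi) = sqnorm psi.
Proof.
case=> gs_ok _; elim: gs gs_ok => //= g gs IH [g_ok gs_ok].
by rewrite sqnorm_unitary ?IH //; apply: gate_unitary.
Qed.

End Gates.

Section Oracle.
Variables n d m k : nat.
Local Notation w := (qwidth d n).
Local Notation om := (@oracle_map n d m k).
Implicit Types fs : nat -> option (bs (n + n)) -> option (bs (n + n)).

Lemma qwidth_gt0 : (0 < w)%N.
Proof. by rewrite /qwidth addnS. Qed.

Definition slot_idx (y : bs m) (s : nat) : nat :=
  (\sum_(t < d.+1) getb y (s * w + t) * 2 ^ t)%N.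
Definition slot_inp (y : bs m) (s : nat) : option (bs (n + n)) :=
  dec n (fun j => getb y (s * w + d.+1 + j)).

Lemma oracle_mapE fs (y : bs m) (q : 'I_m) :
  om fs y q =
  if ((q < k * w) && (d.+1 + elen n <= q %% w) && (slot_idx y (q %/ w) <= d))%N
  then y q (+) enc (fs (slot_idx y (q %/ w)) (slot_inp y (q %/ w))) (q %% w - (d.+1 + elen n))
  else y q.
Proof. by rewrite /oracle_map ffunE /=; case: ifP => //= _; case: ifP. Qed.

Lemma getb_oracle_map fs (y : bs m) p :
  ~~ ((p < k * w) && (d.+1 + elen n <= p %% w))%N -> getb (om fs y) p = getb y p.
Proof.
move=> not_answer; rewrite /getb; case: insubP => //= q _ qp.
by rewrite oracle_mapE qp (negbTE not_answer).
Qed.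

Lemma modn_slot s t : (t < w)%N -> ((s * w + t) %% w = t)%N.
Proof. by move=> tw; rewrite modnMDl modn_small. Qed.

Lemma slot_idx_oracle_map fs (y : bs m) s : slot_idx (om fs y) s = slot_idx y s.
Proof.
apply: eq_bigr => t _; rewrite getb_oracle_map // modn_slot.
  by apply/nandP; right; rewrite -ltnNge; exact: (leq_trans (ltn_ord t) (leq_addr _ _)).
by apply: (leq_trans (ltn_ord t)); rewrite /qwidth -addnA leq_addr.
Qed.

Lemma slot_inp_oracle_map fs (y : bs m) s : slot_inp (om fs y) s = slot_inp y s.
Proof.
have input_bits j : (j < elen n)%N ->
    getb (om fs y) (s * w + d.+1 + j) = getb y (s * w + d.+1 + j).
  move=> jl; rewrite getb_oracle_map // -addnA modn_slot.
    by apply/nandP; right; rewrite -ltnNge ltn_add2l.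
  by rewrite /qwidth -addnA ltn_add2l ltn_addr.
rewrite /slot_inp /dec input_bits //; case: ifP => // _.
by congr Some; apply/ffunP => j; rewrite !ffunE input_bits // /elen ltnS.
Qed.

Lemma oracle_map_invol fs : involutive (om fs).
Proof.
move=> y; apply/ffunP => q.
rewrite oracle_mapE slot_idx_oracle_map slot_inp_oracle_map oracle_mapE.
by case: ((q < k * w)%N && _ && _) => //; rewrite -addbA addbb addbF.
Qed.

Definition queries_agree fs fs' (y : bs m) : bool :=
  [forall s : 'I_k, (slot_idx y s <= d)%N ==>
     (fs (slot_idx y s) (slot_inp y s) == fs' (slot_idx y s) (slot_inp y s))].

Lemma queries_agree_oracle_map fs fs' fs'' y :
  queries_agree fs fs' (om fs'' y) = queries_agree fs fs' y.
Proof. by apply: eq_forallb => s; rewrite slot_idx_oracle_map slot_inp_oracle_map. Qed.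

Lemma oracle_map_agree fs fs' y : queries_agree fs fs' y -> om fs y = om fs' y.
Proof.
move=> /forallP agree; apply/ffunP => q; rewrite !oracle_mapE.
case: (ltnP q (k * w)) => //= qk.
case: ifP => //= /andP [_ idx_le].
have sk : (q %/ w < k)%N by rewrite ltn_divLR ?qwidth_gt0.
by have := agree (Ordinal sk); rewrite /= idx_le /= => /eqP ->.
Qed.

Variable R : realType.
Local Notation C := R[i].
Local Notation OP fs := (@oracle_op R n d m k fs).

Lemma applyop_oracle fs (psi : bs m -> C) :
  applyop (OP fs) psi = fun x => psi (om fs x).
Proof.
apply: funext => x; rewrite /applyop /oracle_op.
rewrite (bigD1 (om fs x)) //= big1 ?addr0 ?oracle_map_invol ?eqxx ?mul1r //.
move=> y yx; case: eqP => [E|]; last by rewrite mul0r.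
by move: yx; rewrite E oracle_map_invol eqxx.
Qed.

Lemma sqnorm_oracle fs (psi : bs m -> C) : sqnorm (applyop (OP fs) psi) = sqnorm psi.
Proof.
by rewrite applyop_oracle /sqnorm (sum_involutive (oracle_map_invol fs) (fun x => `|psi x| ^+ 2)).
Qed.

Lemma sqnorm_oracle_sub fs fs' (psi : bs m -> C) :
  sqnorm (state_sub (applyop (OP fs) psi) (applyop (OP fs') psi))
  <= 4 * \sum_y (~~ queries_agree fs fs' y)%:R * `|psi y| ^+ 2.
Proof.
pose bad y := (~~ queries_agree fs fs' y)%:R * `|psi y| ^+ 2.
have sum_bad fs'' : \sum_x bad (om fs'' x) = \sum_y bad y.
  exact: sum_involutive (oracle_map_invol fs'') bad.
rewrite !applyop_oracle /sqnorm /state_sub.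
apply: (@le_trans _ _ (\sum_x (2 * bad (om fs x) + 2 * bad (om fs' x)))).
  apply: ler_sum => x _; rewrite /bad !queries_agree_oracle_map.
  case: (boolP (queries_agree fs fs' x)) => agree /=.
    by rewrite (oracle_map_agree agree) subrr normr0 expr0n /= !mul0r mulr0 addr0.
  by rewrite !mul1r normB_sqr_le.
by rewrite big_split /= -!mulr_sumr !sum_bad -mulrDl -natrD.
Qed.

End Oracle.

Lemma forall2_involutive (T : finType) (f : T -> T) (P : T -> T -> bool) :
  involutive f -> [forall x, forall y, P (f x) (f y)] = [forall x, forall y, P x y].
Proof.
move=> fK; apply/forallP/forallP => H x; apply/forallP => y.
  by have := H (f x) => /forallP /(_ (f y)); rewrite !fK.
by have := H (f x) => /forallP /(_ (f y)).
Qed.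

Section CondXor.
Variables (n : nat) (p : 'I_n) (u : bs n).
Hypothesis u_p : u p = false.

Definition cond_xor (x : bs n) : bs n := if x p then bxor x u else x.

Lemma cond_xor_invol : involutive cond_xor.
Proof.
move=> x; rewrite /cond_xor; have [xp|/negbTE xp] := boolP (x p); rewrite ?xp //.
rewrite ffunE xp u_p /=; apply/ffunP => q; rewrite !ffunE.
by rewrite -addbA addbb addbF.
Qed.

Lemma cond_xor_bxor x y : cond_xor (bxor x y) = bxor (cond_xor x) (cond_xor y).
Proof.
rewrite /cond_xor ffunE; apply/ffunP => q.
by case: (x p); case: (y p) => /=; rewrite !ffunE //;
  case: (x q); case: (y q); case: (u q).
Qed.

Lemma cond_xor0 : cond_xor (zeros n) = zeros n.
Proof. by rewrite /cond_xor ffunE. Qed.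

Lemma simon_pair_cond_xor (g : {ffun bs n -> bs n}) s :
  simon_pair [ffun x => g (cond_xor x)] (cond_xor s) = simon_pair g s.
Proof.
have cx_inj := can_inj cond_xor_invol.
rewrite /simon_pair -{1}cond_xor0 (inj_eq cx_inj); congr (_ && _).
rewrite -(forall2_involutive
  (fun x y => (g x == g y) == ((y == x) || (y == bxor x s))) cond_xor_invol).
apply: eq_forallb => x; apply: eq_forallb => y.
rewrite !ffunE (inj_eq cx_inj); congr ((_ == _) == (_ || _)).
by rewrite -{2}(cond_xor_invol s) -cond_xor_bxor (inj_eq cx_inj).
Qed.

End CondXor.

Section Instances.
Variables (R : realType) (n d : nat).
Local Notation C := R[i].
Local Notation layer := {ffun bs n -> bs (n + n)}.
Local Notation I := (instances n d).

Definition shuffled_instance :=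
  ({ffun bs n -> bs n} * bs n * {ffun 'I_d -> layer})%type.

Definition set_tuple (T : {ffun 'I_d -> layer}) (r : 'I_d) (f : layer) :
  {ffun 'I_d -> layer} := [ffun i => if i == r then f else T i].

Definition hits (f : layer) (o : option (bs (n + n))) : bool :=
  if o is Some v then [exists x, f x == v] else false.

Lemma injectiveb_perm_comp (p : {perm bs (n + n)}) (f : layer) :
  injectiveb [ffun x => p (f x)] = injectiveb f.
Proof.
apply/injectiveP/injectiveP => f_inj x y E.
  by apply: f_inj; rewrite !ffunE E.
by apply: f_inj; move: E; rewrite !ffunE => /perm_inj.
Qed.

Lemma instances_perm_tuple (w : shuffled_instance) r (p : {perm bs (n + n)}) :
  ((w.1, set_tuple w.2 r [ffun x => p (w.2 r x)]) \in I) = (w \in I).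
Proof.
rewrite !inE /=; congr (_ && _); apply: eq_forallb => i.
by rewrite ffunE; case: eqP => [->|//]; rewrite injectiveb_perm_comp.
Qed.

Section HitCount.
Variables (r : 'I_d) (F : shuffled_instance -> C).
Hypothesis F_indep : forall w f, F (w.1, set_tuple w.2 r f) = F w.

Lemma sum_hits_const v v' :
  \sum_(w in I) (hits (w.2 r) (Some v))%:R * F w =
  \sum_(w in I) (hits (w.2 r) (Some v'))%:R * F w.
Proof.
rewrite !(big_mkcond (fun w => w \in I)) /=.
pose swap (w : shuffled_instance) : shuffled_instance :=
  (w.1, set_tuple w.2 r [ffun x => tperm v v' (w.2 r x)]).
have swapK : involutive swap.
  case=> w1 T; rewrite /swap /=; congr (_, _); apply/ffunP => i; rewrite !ffunE.
  case: eqP => [->|//]; apply/ffunP => x; rewrite !ffunE eqxx.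
  by rewrite ffunE tpermK.
rewrite -(sum_involutive swapK); apply: eq_bigr => w _.
rewrite instances_perm_tuple F_indep; case: (w \in I) => //.
congr (_%:R * _); rewrite /hits /swap /=; congr nat_of_bool.
apply/existsP/existsP => [[j /eqP E]|[j /eqP E]]; exists j.
  move: E; rewrite ffunE eqxx ffunE => E.
  by apply/eqP; apply: (@perm_inj _ (tperm v v')); rewrite E tpermR.
by rewrite ffunE eqxx ffunE E tpermR.
Qed.

Lemma sum_hits_image :
  \sum_v \sum_(w in I) (hits (w.2 r) (Some v))%:R * F w =
  (2 ^ n)%:R * \sum_(w in I) F w.
Proof.
rewrite exchange_big /= mulr_sumr; apply: eq_bigr => w w_inst.
rewrite -mulr_suml; congr (_ * _).
have w_inj : injective (w.2 r).
  by move: w_inst; rewrite inE => /andP [_ /forallP /(_ r) /injectiveP].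
rewrite -(card_bs n) -(card_codom w_inj) -sum1_card natr_sum [RHS]big_mkcond /=.
apply: eq_bigr => v _; rewrite /hits; case: ifP => /codomP.
  by move=> [x ->]; case: existsP => // [[]]; exists x.
by move=> not_img; case: existsP => // [[x /eqP E]]; case: not_img; exists x.
Qed.

Lemma sum_hits v :
  (2 ^ (n + n))%:R * \sum_(w in I) (hits (w.2 r) (Some v))%:R * F w =
  (2 ^ n)%:R * \sum_(w in I) F w.
Proof.
rewrite -sum_hits_image (eq_bigr _ (fun v' _ => sum_hits_const v' v)).
by rewrite sumr_const card_bs mulr_natl.
Qed.

End HitCount.

Lemma sum_secret_bit (F : shuffled_instance -> C) (z z' : bs n) p :
  z p -> z' p -> (forall w g s, F ((g, s), w.2) = F w) ->
  \sum_(w in I) (w.1.2 == z)%:R * F w = \sum_(w in I) (w.1.2 == z')%:R * F w.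
Proof.
move=> zp z'p F_indep.
have u_p : bxor z z' p = false by rewrite ffunE zp z'p.
pose A := cond_xor p (bxor z z').
have AK : involutive A := cond_xor_invol u_p.
have Az' : A z' = z.
  rewrite /A /cond_xor z'p; apply/ffunP => q; rewrite !ffunE.
  by case: (z q); case: (z' q).
pose relabel (w : shuffled_instance) : shuffled_instance :=
  (([ffun x => w.1.1 (A x)], A w.1.2), w.2).
have relabelK : involutive relabel.
  case=> [[g s] T]; rewrite /relabel /= AK; congr ((_, _), _).
  by apply/ffunP => x; rewrite !ffunE AK.
rewrite !(big_mkcond (fun w => w \in I)) /=.
rewrite -(sum_involutive relabelK); apply: eq_bigr => w _.
rewrite /relabel /= F_indep !inE /= (simon_pair_cond_xor u_p).
by rewrite -{1}Az' (inj_eq (can_inj AK)).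
Qed.

Lemma sum_secret_eq (F : shuffled_instance -> C) (z z' : bs n) :
  z != zeros n -> z' != zeros n -> (forall w g s, F ((g, s), w.2) = F w) ->
  \sum_(w in I) (w.1.2 == z)%:R * F w = \sum_(w in I) (w.1.2 == z')%:R * F w.
Proof.
move=> nz nz' F_indep.
have some_bit (x : bs n) : x != zeros n -> exists p, x p.
  move=> x_nz; case: (pickP (fun p => x p)) => [p xp|none]; first by exists p.
  by case/eqP: x_nz; apply/ffunP => q; rewrite ffunE; apply/negbTE; rewrite none.
case: (pickP (fun p => z p && z' p)) => [p /andP [zp z'p]|disjoint].
  exact: sum_secret_bit zp z'p F_indep.
have [p zp] := some_bit z nz; have [p' z'p'] := some_bit z' nz'.
have zz'p : bxor z z' p by rewrite ffunE zp; have := disjoint p; rewrite zp /= => ->.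
have zz'p' : bxor z z' p' by rewrite ffunE z'p'; have := disjoint p'; rewrite z'p' andbT => ->.
by rewrite (sum_secret_bit zp zz'p F_indep) (sum_secret_bit zz'p' z'p' F_indep).
Qed.

End Instances.

Section Hybrid.
Variables (R : realType) (n d m k : nat).
Local Notation C := R[i].
Local Notation OP fs := (@oracle_op R n d m k fs).
Local Notation tuples := {ffun 'I_d -> {ffun bs n -> bs (n + n)}}.
Local Notation I := (instances n d).
Variable layers : nat -> seq (gate R m).
Hypothesis layersP : forall j, (j <= d)%N -> single_layer (layers j).

Definition truncate (J : nat) (fs : nat -> option (bs (n + n)) -> option (bs (n + n))) :=
  fun i x => if (i < J)%N then fs i x else None.

Fixpoint hybrid (g : {ffun bs n -> bs n}) (T : tuples) (j : nat) : bs m -> C :=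
  match j with
  | 0 => apply_layer (layers 0) (@psi0 R m)
  | j'.+1 => apply_layer (layers j)
               (applyop (OP (truncate j (shuf_fun g T))) (hybrid g T j'))
  end.

Lemma tup_prefix g g' (T T' : tuples) J i :
  (J <= d)%N -> (forall r : 'I_d, (r < J)%N -> T r = T' r) -> (i <= J)%N ->
  tup g T i = tup g' T' i.
Proof.
move=> Jd T_T'; case: i => [//|i] iJ /=.
case: insubP => [r _ ri|]; first by rewrite T_T' // ri.
by move/negP; case; apply: leq_trans iJ Jd.
Qed.

Lemma truncate_shuf_fun g g' (T T' : tuples) J :
  (J <= d)%N -> (forall r : 'I_d, (r < J)%N -> T r = T' r) ->
  truncate J (shuf_fun g T) = truncate J (shuf_fun g' T').
Proof.
move=> Jd T_T'; apply: funext => i; apply: funext => x.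
rewrite /truncate; case: ifP => // iJ; rewrite /shuf_fun; case: x => // v.
by rewrite (tup_prefix g g' Jd T_T' (ltnW iJ)) (tup_prefix g g' Jd T_T' iJ).
Qed.

Lemma hybrid_prefix g g' (T T' : tuples) j :
  (j <= d)%N -> (forall r : 'I_d, (r < j)%N -> T r = T' r) ->
  hybrid g T j = hybrid g' T' j.
Proof.
elim: j => [//|j IH] jd T_T' /=.
rewrite IH ?(ltnW jd) //; last by move=> r rj; apply: T_T'; apply: ltnW.
by rewrite (truncate_shuf_fun g g' jd T_T').
Qed.

Lemma sqnorm_hybrid g T j : (j <= d)%N -> sqnorm (hybrid g T j) = 1.
Proof.
elim: j => [|j IH] jd /=.
  by rewrite sqnorm_apply_layer ?sqnorm_psi0 //; exact: layersP.
rewrite sqnorm_apply_layer; last exact: layersP.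
by rewrite sqnorm_oracle IH // ltnW.
Qed.

Lemma sum_sqnorm_hybrid j : (j <= d)%N ->
  \sum_y \sum_(w in I) `|hybrid w.1.1 w.2 j y| ^+ 2 = #|I|%:R.
Proof.
move=> jd; rewrite exchange_big /= (eq_bigr (fun _ => 1)) ?sumr_const //.
by move=> w _; rewrite -/(sqnorm _) sqnorm_hybrid.
Qed.

Definition bad_weight (g : {ffun bs n -> bs n}) (T : tuples) (j : nat) : C :=
  \sum_y (~~ @queries_agree n d m k (shuf_fun g T) (truncate j.+1 (shuf_fun g T)) y)%:R
         * `|hybrid g T j y| ^+ 2.

Definition hybrid_err (g : {ffun bs n -> bs n}) (T : tuples) (j : nat) : C :=
  sqnorm (state_sub (@evolve R n d m k (shuf_fun g T) layers j) (hybrid g T j)).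

Lemma hybrid_err0 g T : hybrid_err g T 0 = 0.
Proof.
by rewrite /hybrid_err /sqnorm big1 // => x _; rewrite /state_sub /= subrr normr0 expr0n.
Qed.

Lemma hybrid_err_step g T j : (j < d)%N ->
  hybrid_err g T j.+1 <= 2 * hybrid_err g T j + 8 * bad_weight g T j.
Proof.
move=> jd; rewrite /hybrid_err /= -apply_layer_sub sqnorm_apply_layer; last exact: layersP.
set fs := shuf_fun g T; set psi := evolve _ _ _ _ j; set phi := hybrid g T j.
have -> : state_sub (applyop (OP fs) psi) (applyop (OP (truncate j.+1 fs)) phi) =
  (fun x => state_sub (applyop (OP fs) psi) (applyop (OP fs) phi) x +
            state_sub (applyop (OP fs) phi) (applyop (OP (truncate j.+1 fs)) phi) x).
  by apply: funext => x; rewrite /state_sub addrA subrK.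
apply: le_trans (sqnorm_addr_le _ _) _.
rewrite -applyop_sub sqnorm_oracle lerD //.
apply: le_trans (_ : 2 * (4 * bad_weight g T j) <= _); last by rewrite mulrA -natrM.
by rewrite ler_pM2l ?ltr0n //; exact: sqnorm_oracle_sub.
Qed.

Lemma bad_query_hits g T j y : (j < d)%N ->
  (~~ @queries_agree n d m k (shuf_fun g T) (truncate j.+1 (shuf_fun g T)) y)%:R <=
  \sum_(s : 'I_k) \sum_(r : 'I_d | (j <= r)%N) (hits (T r) (slot_inp n d y s))%:R :> C.
Proof.
move=> jd; case: (boolP (queries_agree _ _ _ _ _)) => /=.
  by move=> _; apply: sumr_ge0 => s _; apply: sumr_ge0 => r _; rewrite ler0n.
move=> /forallPn [s]; rewrite negb_imply /truncate => /andP [idx_le].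
case: (slot_idx n d y s) idx_le => [|i] idx_le /=; first by rewrite eqxx.
case: ifP => ij; first by rewrite eqxx.
case inp: (slot_inp n d y s) => [v|] //; rewrite /shuf_fun /=.
case: insubP => [r _ ri|]; last by rewrite idx_le.
case: pickP => [x /eqP tx|] // _.
have hit : (1 : C) <= (hits (T r) (slot_inp n d y s))%:R.
  by rewrite inp /=; case: existsP => // [[]]; exists x; rewrite tx.
apply: le_trans hit _; rewrite (bigD1 s) //= ler_wpDr //.
  by apply: sumr_ge0 => s' _; apply: sumr_ge0 => r' _; rewrite ler0n.
rewrite (bigD1 r) /=; first by rewrite lerDl; apply: sumr_ge0 => r' _; rewrite ler0n.
by rewrite ri; move: ij; rewrite ltnS => /negbT; rewrite -leqNgt.
Qed.

Lemma sum_hits_hybrid j (y : bs m) (s : 'I_k) (r : 'I_d) : (j <= r)%N ->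
  (2 ^ (n + n))%:R *
    \sum_(w in I) (hits (w.2 r) (slot_inp n d y s))%:R * `|hybrid w.1.1 w.2 j y| ^+ 2
  <= (2 ^ n)%:R * \sum_(w in I) `|hybrid w.1.1 w.2 j y| ^+ 2.
Proof.
move=> jr; case: (slot_inp n d y s) => [v|] /=; last first.
  rewrite big1 ?mulr0 ?mulr_ge0 ?ler0n ?sumr_ge0 // => w _.
  - exact: exprn_ge0.
  - by rewrite mul0r.
rewrite (@sum_hits _ _ _ r (fun w => `|hybrid w.1.1 w.2 j y| ^+ 2)) // => w f /=.
have jd : (j <= d)%N by apply: leq_trans jr _; apply: ltnW.
congr (`| _ | ^+ 2); apply: (congr1 (fun h => h y)); apply: hybrid_prefix => // r' r'j.
by rewrite /set_tuple ffunE; case: eqP => // r'r; move: r'j; rewrite r'r ltnNge jr.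
Qed.

Lemma sum_bad_weight_le j : (j < d)%N ->
  \sum_(w in I) bad_weight w.1.1 w.2 j <=
  \sum_y \sum_(s : 'I_k) \sum_(r : 'I_d | (j <= r)%N) \sum_(w in I)
    (hits (w.2 r) (slot_inp n d y s))%:R * `|hybrid w.1.1 w.2 j y| ^+ 2.
Proof.
move=> jd; apply: le_trans (_ : \sum_(w in I) \sum_y
    (\sum_(s : 'I_k) \sum_(r : 'I_d | (j <= r)%N) (hits (w.2 r) (slot_inp n d y s))%:R)
    * `|hybrid w.1.1 w.2 j y| ^+ 2 <= _).
  apply: ler_sum => w _; apply: ler_sum => y _.
  by apply: ler_wpM2r; [exact: exprn_ge0 | exact: bad_query_hits].
rewrite exchange_big /=; rewrite le_eqVlt; apply/orP; left; apply/eqP; apply: eq_bigr => y _.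
under eq_bigr => w _ do rewrite mulr_suml.
rewrite exchange_big /=; apply: eq_bigr => s _.
under eq_bigr => w _ do rewrite mulr_suml.
by rewrite exchange_big.
Qed.

Lemma avg_bad_weight j : (j < d)%N ->
  (2 ^ n)%:R * \sum_(w in I) bad_weight w.1.1 w.2 j <= (k * d)%:R * #|I|%:R.
Proof.
move=> jd.
have weighted : (2 ^ (n + n))%:R * \sum_(w in I) bad_weight w.1.1 w.2 j <=
    (2 ^ n)%:R * ((k * d)%:R * #|I|%:R).
  rewrite (le_trans (ler_wpM2l _ (sum_bad_weight_le jd))) ?ler0n //.
  apply: le_trans (_ : \sum_y \sum_(s : 'I_k) \sum_(r : 'I_d)
      (2 ^ n)%:R * \sum_(w in I) `|hybrid w.1.1 w.2 j y| ^+ 2 <= _).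
    rewrite [X in X <= _]mulr_sumr; apply: ler_sum => y _.
    rewrite [X in X <= _]mulr_sumr; apply: ler_sum => s _.
    rewrite [X in X <= _]mulr_sumr [X in X <= _]big_mkcond /=; apply: ler_sum => r _.
    case: ifP => jr; first exact: sum_hits_hybrid.
    by rewrite mulr_ge0 ?ler0n ?sumr_ge0 // => w _; exact: exprn_ge0.
  under eq_bigr => y _ do rewrite sumr_const sumr_const !card_ord -mulrnA.
  rewrite sumrMnl -mulr_sumr sum_sqnorm_hybrid ?(ltnW jd) // -mulr_natr !natrM.
  by rewrite le_eqVlt; apply/orP; left; apply/eqP; ring.
by rewrite expnD natrM -mulrA ler_pM2l ?ltr0n ?expn_gt0 in weighted.
Qed.

Lemma avg_hybrid_err j : (j <= d)%N ->
  (2 ^ n)%:R * \sum_(w in I) hybrid_err w.1.1 w.2 j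
  <= (8 * j * 2 ^ j * (k * d))%:R * #|I|%:R.
Proof.
elim: j => [|j IH] jd.
  by rewrite big1 ?mulr0 ?mul0n ?mul0r // => w _; rewrite hybrid_err0.
apply: le_trans (_ : (2 ^ n)%:R * \sum_(w in I)
    (2 * hybrid_err w.1.1 w.2 j + 8 * bad_weight w.1.1 w.2 j) <= _).
  by rewrite ler_pM2l ?ltr0n ?expn_gt0 //; apply: ler_sum => w _; exact: hybrid_err_step.
rewrite big_split /= -!mulr_sumr mulrDr !mulrA ![_ * 2]mulrC ![_ * 8]mulrC -!mulrA.
apply: le_trans (_ : 2 * ((8 * j * 2 ^ j * (k * d))%:R * #|I|%:R) +
                     8 * ((k * d)%:R * #|I|%:R) <= _).
  by apply: lerD; rewrite ler_pM2l ?ltr0n // ?IH ?(ltnW jd) // avg_bad_weight.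
rewrite -!natrM -natrD ler_nat expnS.
have : (0 < 2 ^ j)%N by rewrite expn_gt0.
move: (2 ^ j)%N (k * d)%N #|I| => p x c p_gt0.
have -> : (2 * (8 * j * p * x * c) = 16 * j * p * (x * c))%N by nia.
have -> : (8 * j.+1 * (2 * p) * x * c = 16 * j * p * (x * c) + 16 * p * (x * c))%N by nia.
by rewrite -mulnA leq_add2l; move: (x * c)%N => xc; nia.
Qed.

Lemma success_on_le out g s T :
  @success_on R n d m k layers out g s T <=
  2 * \sum_x (out x == s)%:R * `|hybrid g T d x| ^+ 2 + 2 * hybrid_err g T d.
Proof.
rewrite /success_on /hybrid_err /sqnorm !mulr_sumr -big_split /=; apply: ler_sum => x _.
set e := evolve _ _ _ _ _ x; set h := hybrid g T d x.
have -> : e = h + (e - h) by rewrite addrC subrK.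
apply: le_trans (_ : (out x == s)%:R * (2 * `|h| ^+ 2 + 2 * `|e - h| ^+ 2) <= _).
  by apply: ler_wpM2l; rewrite ?ler0n ?normD_sqr_le.
rewrite mulrDr mulrCA lerD // mulrCA ler_pM2l ?ltr0n //.
by case: (out x == s); rewrite ?mul1r ?mul0r // exprn_ge0.
Qed.

Lemma avg_guess_hybrid out :
  (2 ^ n).-1%:R * \sum_(w in I) \sum_x (out x == w.1.2)%:R * `|hybrid w.1.1 w.2 d x| ^+ 2
  <= #|I|%:R.
Proof.
rewrite exchange_big /= mulr_sumr -(sum_sqnorm_hybrid (leqnn d)); apply: ler_sum => x _.
set G := fun w : shuffled_instance n d => `|hybrid w.1.1 w.2 d x| ^+ 2.
have G_indep (w : shuffled_instance n d) g s : G ((g, s), w.2) = G w.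
  by rewrite /G /= (hybrid_prefix g w.1.1 (T' := w.2)).
have secret_nz w : w \in I -> w.1.2 != zeros n.
  by rewrite inE => /andP [/andP []].
case: (eqVneq (out x) (zeros n)) => [out0|out_nz].
  rewrite big1 ?mulr0 ?sumr_ge0 // => w w_inst; first exact: exprn_ge0.
  by rewrite out0 eq_sym (negbTE (secret_nz w w_inst)) mul0r.
pose S z := \sum_(w in I) (w.1.2 == z)%:R * G w.
have -> : \sum_(w in I) (out x == w.1.2)%:R * G w = S (out x).
  by apply: eq_bigr => w _; rewrite eq_sym.
have nz_secrets : #|[pred z : bs n | z != zeros n]| = (2 ^ n).-1.
  by rewrite -(card_bs n) -(cardC1 (zeros n)); apply: eq_card => z.
have <- : \sum_(z | z != zeros n) S z = (2 ^ n).-1%:R * S (out x).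
  rewrite (eq_bigr (fun _ => S (out x))) ?sumr_const ?nz_secrets ?mulr_natl // => z z_nz.
  exact: sum_secret_eq.
rewrite le_eqVlt; apply/orP; left; apply/eqP.
rewrite /S exchange_big /=; apply: eq_bigr => w w_inst.
rewrite -mulr_suml (bigD1 w.1.2) ?secret_nz //= eqxx big1 ?addr0 ?mul1r //.
by move=> z /andP [_ zw]; rewrite eq_sym (negbTE zw).
Qed.

End Hybrid.

Lemma sum_success_le (R : realType) (n d m k : nat) (layers : nat -> seq (gate R m))
    (out : bs m -> bs n) :
  (forall j, (j <= d)%N -> single_layer (layers j)) -> (0 < n)%N ->
  (2 ^ n)%:R * \sum_(w in instances n d) @success_on R n d m k layers out w.1.1 w.1.2 w.2
  <= (4 + 16 * d * 2 ^ d * (k * d))%:R * #|instances n d|%:R.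
Proof.
move=> layersP n_gt0; set I := instances n d.
pose guess (w : shuffled_instance n d) := \sum_x (out x == w.1.2)%:R *
  `|hybrid k layers w.1.1 w.2 d x| ^+ 2 : R[i].
have guess_ge0 w : 0 <= guess w.
  by apply: sumr_ge0 => x _; rewrite mulr_ge0 ?ler0n ?exprn_ge0.
apply: le_trans (_ : (2 ^ n)%:R * (2 * \sum_(w in I) guess w +
    2 * \sum_(w in I) hybrid_err k layers w.1.1 w.2 d) <= _).
  rewrite ler_pM2l ?ltr0n ?expn_gt0 // !mulr_sumr -big_split /=.
  by apply: ler_sum => w _; apply: success_on_le.
have avg_guess : (2 ^ n)%:R * \sum_(w in I) guess w <= 2 * #|I|%:R.
  apply: le_trans (_ : 2 * ((2 ^ n).-1%:R * \sum_(w in I) guess w) <= _); last first.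
    by rewrite ler_pM2l ?ltr0n // avg_guess_hybrid.
  rewrite mulrA ler_wpM2r ?sumr_ge0 // -natrM ler_nat.
  have : (2 <= 2 ^ n)%N by rewrite -{1}(expn1 2) leq_exp2l.
  by move: (2 ^ n)%N => p; lia.
rewrite mulrDr !mulrA ![_ * 2]mulrC -!mulrA.
apply: le_trans (_ : 2 * (2 * #|I|%:R) +
    2 * ((8 * d * 2 ^ d * (k * d))%:R * #|I|%:R) <= _).
  by apply: lerD; rewrite ler_pM2l ?ltr0n // avg_hybrid_err.
by rewrite -!natrM -!natrD ler_nat; nia.
Qed.

Lemma affine_le_poly A c n x : (0 < n)%N -> (x <= n ^ c + c)%N ->
  (4 + A * x <= n ^ (c + 4 + A + A * c) + (c + 4 + A + A * c))%N.
Proof.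
move=> n_gt0 x_le.
have Ax_le : (A * x <= A * n ^ c + A * c)%N by rewrite -mulnDr leq_mul2l x_le orbT.
suff : (A * n ^ c <= n ^ (c + 4 + A + A * c) + A)%N by lia.
case: (ltnP n 2) => n2.
  have -> : n = 1%N by lia.
  by rewrite !exp1n muln1 leq_addl.
rewrite -!addnA expnD mulnC (leq_trans _ (leq_addr _ _)) // leq_mul2l; apply/orP; right.
case: (posnP A) => [->//|A_gt0].
apply: leq_trans (ltnW (ltn_expl A (isT : 1 < 2)%N)) _.
apply: leq_trans (_ : n ^ A <= _)%N; first by rewrite leq_exp2r.
by rewrite leq_exp2l //; lia.
Qed.

Theorem mainTheorem5 (R : realType) (d : nat) (hd : (1 <= d)%N) (c : nat) :
  exists C0 : nat,
    forall (n m k : nat),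
      (k * qwidth d n <= m)%N ->
      (m <= n ^ c + c)%N ->
      forall (layers : nat -> seq (gate R m)),
        (forall j, (j <= d)%N -> single_layer (layers j)) ->
        forall (out : bs m -> bs n),
          @success_prob R n d m k layers out <= (n ^ C0 + C0)%:R / 2 ^+ n :> R[i].
Proof.
pose A := (16 * d * 2 ^ d * d)%N.
exists (c + 4 + A + A * c)%N => n m k km m_le layers layersP out.
rewrite /success_prob; case: (posnP #|instances n d|) => [->|I_gt0].
  by rewrite invr0 mulr0 divr_ge0 ?ler0n // exprn_ge0 ?ler0n.
have n_gt0 : (0 < n)%N.
  move: I_gt0; rewrite card_gt0 => /set0Pn [w]; rewrite inE => /andP [/andP [s_nz _] _].
  rewrite lt0n; apply/eqP => n0; apply: (negP s_nz); apply/eqP/ffunP => i.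
  by have := ltn_ord i; rewrite {2}n0.
have k_le : (k <= n ^ c + c)%N.
  apply: leq_trans m_le; apply: leq_trans km; rewrite leq_pmulr // /qwidth addnS.
rewrite -natrX ler_pdivrMr ?ltr0n // mulrAC ler_pdivlMr ?ltr0n ?expn_gt0 //.
rewrite mulrC (le_trans (sum_success_le k out layersP n_gt0)) //.
rewrite ler_wpM2r ?ler0n // ler_nat.
have -> : (16 * d * 2 ^ d * (k * d) = A * k)%N by rewrite /A; nia.
exact: affine_le_poly.
Qed.
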